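(* Let $q$ be a prime power and $k\ge3$, $u\ge2$, $h\ge1$ integers. Let $U_1,\dots,U_h$ be $u$-dimensional subspaces of $\mathbf F_q^k$ with $U_i\cap U_j=\{0\}$ for $i\ne j$, and assume $q^k-q^{k-1}>h(q^u-1)$. Let $U$ be the set of nonzero vectors of $\mathbf F_q^k$ not in $U_1\cup\dots\cup U_h$, let $\widetilde G$ be a matrix whose columns consist of exactly one representative of each class $\{\lambda\mathbf v:\lambda\in\mathbf F_q^*\}$, $\mathbf v\in U$, and let $\mathbf C$ be the linear code with generator matrix $\widetilde G$. Then the Griesmer defect of $\mathbf C$ is at most $\sum_{i=1}^{k-u}\lfloor h/q^i\rfloor$.
   Context: For a linear $[n,k,d]_q$ code, $g_q(k,d)=\sum_{i=0}^{k-1}\lceil d/q^i\rceil$ and the Griesmer defect is $n-g_q(k,d)$. *)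

From HB Require Import structures.
From mathcomp Require Import all_boot all_order all_algebra all_field.
Set Implicit Arguments. Unset Strict Implicit. Unset Printing Implicit Defensive.
Import GRing.Theory.
Local Open Scope ring_scope.

Definition hwt (F : fieldType) (n : nat) (v : 'rV[F]_n) : nat :=
  #|[set j : 'I_n | v 0 j != 0]|.

(* minimum distance of the linear code with generator matrix G (k x n):
   the least weight of a nonzero codeword x *m G (defaults to n if the code is zero) *)
Definition min_dist (F : finFieldType) (k n : nat) (G : 'M[F]_(k, n)) : nat :=
  \big[minn/n]_(x : 'rV[F]_k | x *m G != 0) hwt (x *m G).

Definition ceil_div (a b : nat) : nat := (a + b.-1) %/ b.

Definition griesmer (q k d : nat) : nat := \sum_(i < k) ceil_div d (q ^ i).

Definition griesmer_defect (F : finFieldType) (q k n : nat) (G : 'M[F]_(k, n)) : nat :=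
  (n - griesmer q (\rank G) (min_dist G))%N.

(* The columns of G represent each projective point outside U_1, ..., U_h once, so
   (q-1) n + h (q^u - 1) <= q^k - 1.  For a message x != 0, each of the q^k - q^(k-1)
   vectors off the hyperplane x^perp either lies in some U_i, which meets x^perp in
   dimension >= u - 1 and so contributes at most q^u - q^(u-1) of them, or is a nonzero
   multiple of a column c_j with c_j.x != 0, of which there are at most (q-1) wt(xG).  Hence
   every nonzero codeword has weight >= d0 = q^(k-1) - h q^(u-1) > 0, the code has
   dimension k, and g_q(k, d0) is computed exactly from
   ceil((q^(k-1) - Y) / q^i) = q^(k-1-i) - floor(Y / q^i) with Y = h q^(u-1). *)

From HB Require Import structures.
From mathcomp Require Import all_boot all_order all_algebra all_field.
From mathcomp Require Import zify.
Import GRing.Theory.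
Local Open Scope ring_scope.
Set Implicit Arguments. Unset Strict Implicit. Unset Printing Implicit Defensive.

Section GriesmerArith.
Local Open Scope nat_scope.

Lemma ceil_div_mulB X m Y : 0 < m -> Y <= X * m -> ceil_div (X * m - Y) m = X - Y %/ m.
Proof.
move=> m_gt0 leYXm; rewrite /ceil_div.
have ltYm := ltn_pmod Y m_gt0.
have leYX : Y %/ m * m <= X * m by rewrite leq_mul2r -(mulnK X m_gt0) leq_div2r ?orbT.
have EY := divn_eq Y m.
have -> : X * m - Y + m.-1 = (X - Y %/ m) * m + (m.-1 - Y %% m) by rewrite mulnBl; lia.
by rewrite divnMDl // (divn_small (_ : m.-1 - Y %% m < m)) ?addn0 //; lia.
Qed.

Lemma leq_griesmer q k d d' : d <= d' -> griesmer q k d <= griesmer q k d'.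
Proof. by move=> le_dd'; apply: leq_sum => i _; rewrite leq_div2r ?leq_add2r. Qed.

Lemma griesmer_expnB q k Y : 0 < q -> Y <= q ^ k ->
  griesmer q k.+1 (q ^ k - Y) + \sum_(i < k.+1) Y %/ q ^ i = \sum_(i < k.+1) q ^ i.
Proof.
move=> q_gt0 leYqk; rewrite /griesmer -big_split [RHS](reindex_inj rev_ord_inj) /=.
apply: eq_bigr => i _; rewrite subSS.
have qiP : 0 < q ^ i by rewrite expn_gt0 q_gt0.
have Eqk : q ^ k = q ^ (k - i) * q ^ i by rewrite -expnD subnK // -ltnS.
have leYi : Y %/ q ^ i <= q ^ (k - i).
  by rewrite -(mulnK (q ^ (k - i)) qiP) -Eqk leq_div2r.
by rewrite Eqk ceil_div_mulB -?Eqk // subnK.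
Qed.

Lemma sum_div_mul_expn q b m h : 0 < q ->
  \sum_(i < b.+1 + m) (h * q ^ b) %/ q ^ i =
  h * \sum_(i < b.+1) q ^ i + \sum_(1 <= i < m.+1) h %/ q ^ i.
Proof.
move=> q_gt0; rewrite big_split_ord /=; congr (_ + _).
  rewrite (eq_bigr (fun i : 'I_b.+1 => h * q ^ (b - i))) => [|i _]; last first.
    have Eqb : q ^ b = q ^ (b - i) * q ^ i by rewrite -expnD subnK // -ltnS.
    by rewrite Eqb mulnA mulnK // expn_gt0 q_gt0.
  rewrite -big_distrr (reindex_inj rev_ord_inj) /=; congr (h * _).
  by apply: eq_bigr => i _; rewrite subSS subKn // -ltnS.
rewrite big_add1 /= big_mkord; apply: eq_bigr => i _.
by rewrite addSnnS addnC expnD divnMr // expn_gt0 q_gt0.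
Qed.

Lemma expn_subpred q m : 0 < m -> q ^ m - q ^ m.-1 = q.-1 * q ^ m.-1.
Proof. by case: m => // m _; rewrite expnS -[X in _ - X]mul1n -mulnBl subn1. Qed.

Lemma ltn_mul_expn_pred q a b h : 0 < q -> 0 < a -> 0 < b ->
  h * (q ^ a - 1) < q ^ b - q ^ b.-1 -> h * q ^ a.-1 < q ^ b.-1.
Proof.
move=> q_gt0 a_gt0 b_gt0; rewrite expn_subpred // => lt_hqb.
have le_hqa : h * (q.-1 * q ^ a.-1) <= h * (q ^ a - 1).
  by rewrite -expn_subpred // leq_mul2l leq_sub2l ?orbT // expn_gt0 q_gt0.
by have := leq_ltn_trans le_hqa lt_hqb; rewrite mulnCA ltn_mul2l => /andP[].
Qed.

Lemma griesmer_gap_le q k u h n d : 1 < q -> 0 < u <= k ->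
  h * q ^ u.-1 <= q ^ k.-1 ->
  (q - 1) * n + h * (q ^ u - 1) < q ^ k ->
  q ^ k.-1 <= d + h * q ^ u.-1 ->
  n - griesmer q k d <= \sum_(1 <= i < (k - u).+1) h %/ q ^ i.
Proof.
move=> q_gt1 /andP[u_gt0 le_uk] le_hqu lt_nqk le_dqk.
have q_gt0 : 0 < q by lia.
case: k le_uk le_hqu lt_nqk le_dqk => [|a]; case: u u_gt0 => [|b] //= _ le_ba.
move=> le_hqb lt_nqa le_dqa.
set S := \sum_(_ <= _ < _) _.
have Eg := griesmer_expnB q_gt0 le_hqb.
have := sum_div_mul_expn b (a.+1 - b.+1) h q_gt0; rewrite subnKC // => Esplit.
rewrite Esplit in Eg.
have le_g : griesmer q a.+1 (q ^ a - h * q ^ b) <= griesmer q a.+1 d.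
  by apply: leq_griesmer; lia.
have : q.-1 * (n + h * \sum_(i < b.+1) q ^ i) <= q.-1 * \sum_(i < a.+1) q ^ i.
  have qa_gt0 : 0 < q ^ a.+1 by rewrite expn_gt0 q_gt0.
  move: lt_nqa; rewrite !subn1 predn_exp mulnCA -mulnDr -(prednK qa_gt0) ltnS.
  by rewrite predn_exp.
rewrite leq_pmul2l; last by lia.
lia.
Qed.

End GriesmerArith.

Section FinsetCounting.
Local Open Scope nat_scope.
Variables I T : finType.

Lemma leq_card_bigcup (A : I -> {set T}) : #|\bigcup_i A i| <= \sum_i #|A i|.
Proof.
elim/big_rec2: _ => [|i B s _ leBs]; first by rewrite cards0.
by rewrite (leq_trans (leq_card_setU _ _).1) ?leq_add2l.
Qed.

Lemma card_bigcup_disjoint (A : I -> {set T}) :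
  (forall i j, i != j -> [disjoint A i & A j]) -> #|\bigcup_i A i| = \sum_i #|A i|.
Proof.
move=> disjA; rewrite -sum1_card (partition_disjoint_bigcup _ _ disjA).
by apply: eq_bigr => i _; rewrite sum1_card.
Qed.

End FinsetCounting.

Section RowSpaces.
Variable F : finFieldType.
Local Notation q := #|F|.

Lemma card_rowspace m k (A : 'M[F]_(m, k)) :
  #|[set v : 'rV[F]_k | (v <= A)%MS]| = (q ^ \rank A)%N.
Proof.
have -> : [set v : 'rV[F]_k | (v <= A)%MS] = [set y *m row_base A | y in [set: 'rV_(\rank A)]].
  apply/setP => v; rewrite inE; apply/idP/imsetP => [|[y _ ->]].
    by rewrite -(eq_row_base A) => /submxP[y ->]; exists y.
  by rewrite -(eq_row_base A) submxMl.
by rewrite card_imset ?cardsT ?card_mx ?mul1n //; exact: row_free_inj (row_base_free A).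
Qed.

Lemma card_hyperplane k (x : 'rV[F]_k) : x != 0 ->
  #|[set v : 'rV[F]_k | (v <= kermx x^T)%MS]| = (q ^ k.-1)%N.
Proof. by move=> x_neq0; rewrite card_rowspace mxrank_ker mxrank_tr rank_rV x_neq0 subn1. Qed.

Lemma card_off_hyperplane k (x : 'rV[F]_k) : x != 0 ->
  #|[set v : 'rV[F]_k | ~~ (v <= kermx x^T)%MS]| = (q ^ k - q ^ k.-1)%N.
Proof.
move=> x_neq0; have Eq : #|{: 'rV[F]_k}| = (q ^ k)%N by rewrite card_mx mul1n.
rewrite -(card_hyperplane x_neq0) -Eq.
rewrite -(cardsC [set v : 'rV[F]_k | (v <= kermx x^T)%MS]) addKn.
by apply: eq_card => v; rewrite !inE.
Qed.

Lemma card_rowspace_off_hyperplane m k (A : 'M[F]_(m, k)) (x : 'rV[F]_k) :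
  (#|[set v : 'rV[F]_k | (v <= A)%MS && ~~ (v <= kermx x^T)%MS]|
     <= q ^ \rank A - q ^ (\rank A).-1)%N.
Proof.
set S := [set v : 'rV[F]_k | (v <= A)%MS]; set H := [set v : 'rV[F]_k | (v <= kermx x^T)%MS].
have -> : [set v | (v <= A)%MS && ~~ (v <= kermx x^T)%MS] = S :\: H.
  by apply/setP => v; rewrite !inE andbC.
have SH : S :&: H = [set v | (v <= A :&: kermx x^T)%MS].
  by apply/setP => v; rewrite !inE sub_capmx.
have rank_cap : ((\rank A).-1 <= \rank (A :&: kermx x^T))%N.
  have := mxrank_sum_cap A (kermx x^T); rewrite mxrank_ker.
  have := rank_leq_col (A + kermx x^T)%MS; have := rank_leq_col x^T; lia.
rewrite cardsD SH !card_rowspace leq_sub2l // leq_pexp2l //.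
by rewrite ltnW // card_finNzRing_gt1.
Qed.

End RowSpaces.

Section LinearCodes.
Variables (F : finFieldType) (k n : nat) (G : 'M[F]_(k, n)).

Lemma hwt_mulmx_kermx (x : 'rV[F]_k) :
  hwt (x *m G) = #|[set j : 'I_n | ~~ ((col j G)^T <= kermx x^T)%MS]|.
Proof.
apply: eq_card => j; rewrite !inE sub_kermx -trmx_mul trmx_eq0.
rewrite colE mulmxA -colE; congr (~~ _).
apply/eqP/eqP => [xGj0|/matrixP/(_ 0 0)]; last by rewrite !mxE.
by apply/matrixP => a b; move: xGj0; rewrite !ord1 !mxE.
Qed.

Lemma rank_full_hwt_gt0 : (forall x : 'rV[F]_k, x != 0 -> (0 < hwt (x *m G))%N) ->
  \rank G = k.
Proof.
move=> hwt_gt0; apply/eqP/inj_row_free => x xG0; apply/eqP/negPn/negP => /hwt_gt0.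
by rewrite xG0 /hwt (eq_card0 (_ : _ =i pred0)) // => j; rewrite !inE mxE eqxx.
Qed.

Lemma leq_min_dist d : (0 < k)%N ->
  (forall x : 'rV[F]_k, x != 0 -> (d <= hwt (x *m G))%N) -> (d <= min_dist G)%N.
Proof.
move=> k_gt0 le_d_hwt; apply: (big_ind (fun m => d <= m)%N) => [||x xG0].
- pose x0 : 'rV[F]_k := delta_mx 0 (Ordinal k_gt0).
  have x0_neq0 : x0 != 0.
    by apply/eqP => /matrixP/(_ 0 (Ordinal k_gt0)); rewrite !mxE !eqxx; exact/eqP/oner_neq0.
  by rewrite (leq_trans (le_d_hwt _ x0_neq0)) // /hwt (leq_trans (max_card _)) ?card_ord.
- by move=> a b le_da le_db; rewrite leq_min le_da le_db.
- by apply: le_d_hwt; apply: contraNneq xG0 => ->; rewrite mul0mx.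
Qed.

End LinearCodes.

Section NonzeroMultiples.
Variables (F : finFieldType) (k n : nat) (c : 'I_n -> 'rV[F]_k).

Definition nonzero_multiples (J : {set 'I_n}) : {set 'rV[F]_k} :=
  [set p.2 *: c p.1 | p in setX J [set~ 0]].

Lemma card_nonzero_multiples_le J : (#|nonzero_multiples J| <= #|J| * #|F|.-1)%N.
Proof. by rewrite (leq_trans (leq_imset_card _ _)) // cardsX cardsC1. Qed.

Hypothesis c_neq0 : forall j, c j != 0.
Hypothesis c_nonproportional : forall j1 j2, j1 != j2 -> forall lam, c j1 != lam *: c j2.

Lemma card_nonzero_multiples J : #|nonzero_multiples J| = (#|J| * #|F|.-1)%N.
Proof.
rewrite card_in_imset ?cardsX ?cardsC1 // => -[j1 l1] [j2 l2].
rewrite !inE /= => /andP[_ l1_neq0] /andP[_ l2_neq0] El.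
have [ej|nej] := eqVneq j1 j2.
  subst j2; congr (_, _); apply/eqP; rewrite -subr_eq0.
  by move/eqP: El; rewrite -subr_eq0 -scalerBl scaler_eq0 (negPf (c_neq0 j1)) orbF.
have := c_nonproportional nej (l1^-1 * l2).
by rewrite -scalerA -El scalerA mulVf // scale1r eqxx.
Qed.

End NonzeroMultiples.

Section ComplementCode.
Variables (F : finFieldType) (k u h n : nat) (U : 'I_h -> 'M[F]_k) (G : 'M[F]_(k, n)).
Local Notation q := #|F|.
Hypothesis rank_U : forall i, \rank (U i) = u.

Section MinimumWeight.
Hypothesis u_gt0 : (0 < u)%N.
Hypothesis G_covers : forall v : 'rV[F]_k, v != 0 -> (forall i, ~~ (v <= U i)%MS) ->
  exists j : 'I_n, exists lam : F, lam != 0 /\ (col j G)^T = lam *: v.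

Lemma hwt_complement_code (x : 'rV[F]_k) : x != 0 ->
  (q ^ k.-1 <= hwt (x *m G) + h * q ^ u.-1)%N.
Proof.
move=> x_neq0; set K := kermx x^T.
set V := [set v : 'rV[F]_k | ~~ (v <= K)%MS && [forall i, ~~ (v <= U i)%MS]].
set Off := fun i => [set v : 'rV[F]_k | (v <= U i)%MS && ~~ (v <= K)%MS].
have V_sub : V \subset nonzero_multiples (fun j => (col j G)^T) [set j | ~~ ((col j G)^T <= K)%MS].
  apply/subsetP => v; rewrite inE => /andP[vK /forallP vU].
  have v_neq0 : v != 0 by apply: contraNneq vK => ->; rewrite sub0mx.
  have [j [lam [lam_neq0 Ecol]]] := G_covers v_neq0 vU.
  apply/imsetP; exists (j, lam^-1); last by rewrite /= Ecol scalerA mulVf // scale1r.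
  by rewrite !inE /= invr_eq0 lam_neq0 Ecol (eqmx_scale _ lam_neq0) vK.
have off_sub : [set v : 'rV[F]_k | ~~ (v <= K)%MS] \subset V :|: \bigcup_i Off i.
  apply/subsetP => v; rewrite !inE => vK; rewrite vK /=.
  case: (boolP [forall i, ~~ (v <= U i)%MS]) => //= /forallPn[i /negPn vUi].
  by apply/bigcupP; exists i; rewrite // inE vUi.
have le_V : (#|V| <= hwt (x *m G) * q.-1)%N.
  rewrite hwt_mulmx_kermx (leq_trans (subset_leq_card V_sub)) //.
  exact: card_nonzero_multiples_le.
have le_Off : (\sum_i #|Off i| <= h * (q ^ u - q ^ u.-1))%N.
  rewrite -[h in (h * _)%N]card_ord -sum_nat_const leq_sum // => i _.
  by rewrite -(rank_U i) card_rowspace_off_hyperplane.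
have k_gt0 : (0 < k)%N by have := rank_leq_col x; rewrite rank_rV x_neq0.
have q1_gt0 : (0 < q.-1)%N by rewrite -subn1 subn_gt0 card_finNzRing_gt1.
have le_off : (q.-1 * q ^ k.-1 <= #|V| + \sum_i #|Off i|)%N.
  rewrite -expn_subpred // -(card_off_hyperplane x_neq0) (leq_trans (subset_leq_card off_sub)) //.
  by rewrite (leq_trans (leq_card_setU _ _).1) // leq_add2l leq_card_bigcup.
rewrite -(leq_pmul2l q1_gt0) (leq_trans le_off) // mulnDr mulnC mulnCA -expn_subpred //.
by rewrite leq_add.
Qed.

End MinimumWeight.

Section Length.
Hypothesis U_disjoint : forall i j : 'I_h, i != j ->
  forall v : 'rV[F]_k, (v <= U i)%MS -> (v <= U j)%MS -> v = 0.
Hypothesis G_cols : forall j : 'I_n,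
  (col j G)^T != 0 /\ (forall i, ~~ ((col j G)^T <= U i)%MS).
Hypothesis G_nonproportional : forall j1 j2 : 'I_n, j1 != j2 ->
  forall lam : F, (col j1 G)^T != lam *: (col j2 G)^T.

Lemma length_complement_code : ((q - 1) * n + h * (q ^ u - 1) < q ^ k)%N.
Proof.
set Z := [set v : 'rV[F]_k | (v != 0) && [forall i, ~~ (v <= U i)%MS]].
set Ustar := fun i => [set v : 'rV[F]_k | (v <= U i)%MS && (v != 0)].
have card_Ustar i : #|Ustar i| = (q ^ u - 1)%N.
  rewrite -(rank_U i) -card_rowspace (cardsD1 0 [set v : 'rV[F]_k | (v <= U i)%MS]).
  rewrite inE sub0mx add1n subn1 /=.
  by apply: eq_card => v; rewrite !inE andbC.
have card_Ustars : #|\bigcup_i Ustar i| = (h * (q ^ u - 1))%N.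
  rewrite card_bigcup_disjoint => [|i j ij].
    by rewrite (eq_bigr _ (fun i _ => card_Ustar i)) sum_nat_const card_ord.
  rewrite -setI_eq0; apply/eqP/setP => v; rewrite !inE.
  apply/negbTE/andP => -[/andP[vUi v_neq0] /andP[vUj _]].
  by rewrite (U_disjoint ij vUi vUj) eqxx in v_neq0.
have le_Z : ((q - 1) * n <= #|Z|)%N.
  rewrite mulnC subn1 -[n in (n * _)%N]card_ord -cardsT.
  rewrite -(card_nonzero_multiples (fun j => (G_cols j).1) G_nonproportional).
  apply/subset_leq_card/subsetP => v /imsetP[[j lam]]; rewrite !inE /= => lam_neq0 ->.
  rewrite scaler_eq0 (negPf lam_neq0) (G_cols j).1 /=.
  by apply/forallP => i; rewrite (eqmx_scale _ lam_neq0) (G_cols j).2.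
have disj_UZ : [disjoint \bigcup_i Ustar i & Z].
  rewrite -setI_eq0; apply/eqP/setP => v; rewrite !inE.
  apply/negbTE/andP => -[/bigcupP[i _]]; rewrite inE => /andP[vUi _] /andP[_ /forallP].
  by move/(_ i); rewrite vUi.
have sub_nonzero : \bigcup_i Ustar i :|: Z \subset [set~ 0].
  apply/subsetP => v; rewrite !inE => /orP[/bigcupP[i _]|]; rewrite ?inE => /andP[] //.
have := subset_leq_card sub_nonzero; rewrite cardsC1 card_mx mul1n.
move: disj_UZ; rewrite -(leq_card_setU _ _).2 => /eqP ->; rewrite card_Ustars.
have qk_gt0 : (0 < q ^ k)%N by rewrite expn_gt0 (ltnW (card_finNzRing_gt1 _)).
by move=> le_UZ; rewrite -(prednK qk_gt0) ltnS addnC (leq_trans _ le_UZ) // leq_add2l.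
Qed.

End Length.

End ComplementCode.

Theorem lemma2p2 (F : finFieldType) (q k u h n : nat)
  (Hq : #|F| = q) (Hk : (3 <= k)%N) (Hu : (2 <= u)%N) (Hh : (1 <= h)%N)
  (U : 'I_h -> 'M[F]_k)
  (HUdim : forall i, \rank (U i) = u)
  (HUdisj : forall i j : 'I_h, i != j ->
     forall v : 'rV[F]_k, (v <= U i)%MS -> (v <= U j)%MS -> v = 0)
  (Hbig : (h * (q ^ u - 1) < q ^ k - q ^ k.-1)%N)
  (G : 'M[F]_(k, n))
  (Hcol : forall j : 'I_n,
     (col j G)^T != 0 /\ (forall i, ~~ ((col j G)^T <= U i)%MS))
  (Hnonprop : forall j1 j2 : 'I_n, j1 != j2 ->
     forall lam : F, (col j1 G)^T != lam *: (col j2 G)^T)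
  (Hcover : forall v : 'rV[F]_k, v != 0 -> (forall i, ~~ (v <= U i)%MS) ->
     exists j : 'I_n, exists lam : F, lam != 0 /\ (col j G)^T = lam *: v) :
  (griesmer_defect q G <= \sum_(1 <= i < (k - u).+1) h %/ q ^ i)%N.
Proof.
subst q; have q_gt1 := card_finNzRing_gt1 F.
have lt_hqu : (h * #|F| ^ u.-1 < #|F| ^ k.-1)%N.
  by apply: ltn_mul_expn_pred Hbig; rewrite ?(ltnW q_gt1) //; lia.
have le_uk : (u <= k)%N.
  have : (#|F| ^ u.-1 < #|F| ^ k.-1)%N by apply: leq_ltn_trans lt_hqu; rewrite leq_pmull.
  by rewrite ltn_exp2l //; lia.
have hwt_ge := hwt_complement_code HUdim (ltnW Hu) Hcover.
have rank_G : \rank G = k.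
  by apply: rank_full_hwt_gt0 => x /hwt_ge; lia.
have le_d : (#|F| ^ k.-1 - h * #|F| ^ u.-1 <= min_dist G)%N.
  by apply: leq_min_dist => [|x /hwt_ge]; lia.
rewrite /griesmer_defect rank_G; apply: griesmer_gap_le; rewrite ?(ltnW lt_hqu) //.
- by apply/andP; split; lia.
- exact: length_complement_code HUdim HUdisj Hcol Hnonprop.
- lia.
Qed.
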